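(* Let $g\ge 1$ and let $\Gamma_g$ be the chain of $g$ loops with edge lengths $\ell_1,m_1,\dots,\ell_g,m_g$ satisfying the genericity condition. Then there is no divisor $D$ on $\Gamma_g$ of rank $r(D)\ge 1$ such that $K_{\Gamma_g}-2D$ is linearly equivalent to an effective divisor. Equivalently, there is no pair $(D,E)$ of divisors on $\Gamma_g$ with $r(D)\ge 1$, $E$ effective and $2D+E\sim K_{\Gamma_g}$.
   Context: The metric graph $\Gamma_g$: it has vertices $v_0,v_1,\dots,v_g$, and for each $i=1,\dots,g$ two edges joining $v_{i-1}$ and $v_i$, of positive lengths $\ell_i$ and $m_i$. The union of these two edges is the $i$-th loop $\bar\gamma_i$, a circle of circumference $\ell_i+m_i$; consecutive loops $\bar\gamma_i,\bar\gamma_{i+1}$ meet only at $v_i$. Genericity condition: for each $i$, the ratio $\ell_i/m_i$ is not equal to $a/b$ for any positive integers $a,b$ with $a+b\le 2g-2$. A divisor on a metric graph $\Gamma$ is a finite formal $\mathbb Z$-linear combination of points of $\Gamma$; its degree is the sum of coefficients; it is effective if all coefficients are $\ge 0$. A piecewise linear function $\psi$ on $\Gamma$ is a continuous function which is linear with integer slope on each edge of some finite subdivision of $\Gamma$; $\mathrm{ord}_p(\psi)$ is the sum of the incoming slopes of $\psi$ along all edge directions at $p$, and $\mathrm{div}(\psi)=\sum_p \mathrm{ord}_p(\psi)\,p$. Two divisors $D,D'$ are linearly equivalent, $D\sim D'$, if $D-D'=\mathrm{div}(\psi)$ for some such $\psi$. The rank $r(D)$ is the largest integer $r$ such that $D-F$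 is linearly equivalent to an effective divisor for every effective divisor $F$ of degree $r$ ($r(D)=-1$ if $D$ is not equivalent to an effective divisor). The canonical divisor is $K_\Gamma=\sum_{v}(\mathrm{val}(v)-2)\,v$; for $\Gamma_g$ this is $K_{\Gamma_g}=2(v_1+\dots+v_{g-1})$, of degree $2g-2$. *)

From Stdlib Require Import Reals Lra Lia ZArith Arith List.
Open Scope R_scope.

(* Points of Γ_g, in canonical form:
   - [Vtx j]       : the vertex v_j  (valid when j <= g);
   - [Inn i e t]   : the interior point at distance t from v_{i-1} along the
                     edge of loop i of length ℓ_i (e = true) or m_i (e = false);
                     valid when 1 <= i <= g and 0 < t < length.               *)
Inductive point : Type :=
| Vtx : nat -> point
| Inn : nat -> bool -> R -> point.

Definition point_eq_dec (p q : point) : {p = q} + {p <> q}.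
Proof.
  decide equality; [apply Nat.eq_dec | apply Req_EM_T | apply Bool.bool_dec | apply Nat.eq_dec].
Defined.

Section Graph.
Variables (g : nat) (l m : nat -> R).

Definition len (i : nat) (e : bool) : R := if e then l i else m i.

Definition valid_point (p : point) : Prop :=
  match p with
  | Vtx j => (j <= g)%nat
  | Inn i e t => (1 <= i <= g)%nat /\ 0 < t < len i e
  end.

Definition divisor := list (point * Z).

Definition valid_div (D : divisor) : Prop :=
  forall q z, In (q, z) D -> valid_point q.

Definition coef (D : divisor) (p : point) : Z :=
  fold_right (fun qz acc => if point_eq_dec (fst qz) p then (snd qz + acc)%Z else acc) 0%Z D.

Definition deg (D : divisor) : Z := fold_right (fun qz acc => (snd qz + acc)%Z) 0%Z D.

Definition effective (D : divisor) : Prop := forall p, (0 <= coef D p)%Z.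

Definition div_scale (k : Z) (D : divisor) : divisor :=
  map (fun qz => (fst qz, (k * snd qz)%Z)) D.

Definition div_sub (D F : divisor) : divisor := D ++ div_scale (-1) F.

Definition canonical : divisor := map (fun j => (Vtx j, 2%Z)) (seq 1 (g - 1)).

Definition edge_fun (psi : point -> R) (i : nat) (e : bool) (t : R) : R :=
  if Req_EM_T t 0 then psi (Vtx (i - 1))
  else if Req_EM_T t (len i e) then psi (Vtx i)
  else psi (Inn i e t).

Definition is_PL_on (f : R -> R) (L : R) : Prop :=
  exists (n : nat) (x : nat -> R) (s : nat -> Z),
    x 0%nat = 0 /\ x n = L /\
    (forall k, (k < n)%nat -> x k < x (S k)) /\
    (forall k, (k < n)%nat -> forall t, x k <= t <= x (S k) ->
        f t = f (x k) + IZR (s k) * (t - x k)).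

(* piecewise linear function on Γ_g (continuity is built in: the edge
   restrictions are continuous and take the vertex values at the endpoints) *)
Definition is_PL (psi : point -> R) : Prop :=
  forall i e, (1 <= i <= g)%nat -> is_PL_on (edge_fun psi i e) (len i e).

(* outgoing slope s of f at t in the direction of increasing / decreasing t *)
Definition slope_right (f : R -> R) (t : R) (s : Z) : Prop :=
  exists eps, 0 < eps /\ forall h, 0 <= h <= eps -> f (t + h) = f t + IZR s * h.
Definition slope_left (f : R -> R) (t : R) (s : Z) : Prop :=
  exists eps, 0 < eps /\ forall h, 0 <= h <= eps -> f (t - h) = f t + IZR s * h.

(* ord_p(psi) = n : sum over all edge directions at p of the incoming slope
   (incoming slope = - outgoing slope). *)
Definition ord_is (psi : point -> R) (p : point) (n : Z) : Prop :=
  match p with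
  | Inn i e t =>
      exists s1 s2, slope_right (edge_fun psi i e) t s1 /\
                    slope_left (edge_fun psi i e) t s2 /\ n = (- (s1 + s2))%Z
  | Vtx j =>
      exists a1 a2 b1 b2 : Z,
        (if Nat.leb 1 j
         then slope_left (edge_fun psi j true) (len j true) a1 /\
              slope_left (edge_fun psi j false) (len j false) a2
         else a1 = 0%Z /\ a2 = 0%Z) /\
        (if Nat.ltb j g
         then slope_right (edge_fun psi (S j) true) 0 b1 /\
              slope_right (edge_fun psi (S j) false) 0 b2
         else b1 = 0%Z /\ b2 = 0%Z) /\
        n = (- (a1 + a2 + b1 + b2))%Z
  end.

Definition lin_equiv (D D' : divisor) : Prop :=
  exists psi, is_PL psi /\
    forall p, valid_point p -> ord_is psi p (coef D p - coef D' p)%Z.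

Definition rank_prop (D : divisor) (r : nat) : Prop :=
  forall F, valid_div F -> effective F -> deg F = Z.of_nat r ->
    exists E, valid_div E /\ effective E /\ lin_equiv (div_sub D F) E.

Definition rank_ge (D : divisor) (k : nat) : Prop :=
  exists r : nat, (k <= r)%nat /\ rank_prop D r.

End Graph.

Definition generic (g : nat) (l m : nat -> R) : Prop :=
  forall i, (1 <= i <= g)%nat ->
    forall a b : nat, (1 <= a)%nat -> (1 <= b)%nat -> (a + b <= 2 * g - 2)%nat ->
      l i / m i <> INR a / INR b.

From Stdlib Require Import Reals ZArith Arith List Lra Lia.
From Stdlib Require Import ClassicalEpsilon Classical.
Open Scope R_scope.

(* For each loop k, pairing a divisor with the position function
   [pos l k] gives its k-th Abel–Jacobi coordinate [sigma l k], a real number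
   modulo the circumference ℓ_k + m_k.  Writing div(ψ) of a PL function ψ
   explicitly from subdivision data ([principal]) shows that degree and these
   coordinates are invariants of linear equivalence
   ([linear_equiv_invariants]).  The coordinates drive a lattice walk visiting
   loops g, ..., 1: at loop k it keeps its height v when σ_k ≡ v·ℓ_k and climbs
   by one otherwise.  For an effective divisor this walk ends at most at its
   degree ([effective_walk_bound]).  Applied to K - 2D it bounds the walk of
   the residual coordinates 2(g-k)ℓ_k - 2σ_k(D) ([canonical_walk_bound]);
   applied to D minus a well chosen point of each loop, rank ≥ 1 keeps the walk
   of σ(D) two below the largest admissible start ([rank_one_walk_bound]).
   Genericity of ℓ_k/m_k forbids two simultaneous landings of these walks, and
   counting yields a contradiction ([walk_contradiction]). *)


(** * Pairing divisors with functions on points *)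

(* [pairing h D] is the sum over the list representation of D of
   coefficient * h(point); it depends only on the coefficient function
   [coef D] (see [pairing_zero]), so it is linear in D. *)
Definition pairing (h : point -> R) (D : divisor) : R :=
  fold_right (fun qz acc => IZR (snd qz) * h (fst qz) + acc) 0 D.

Definition pairingZ (h : point -> Z) (D : divisor) : Z :=
  fold_right (fun qz acc => (snd qz * h (fst qz) + acc)%Z) 0%Z D.

Lemma pairing_app h A B : pairing h (A ++ B) = pairing h A + pairing h B.
Proof. induction A as [|[q z] A IH]; simpl; [ring | rewrite IH; ring]. Qed.

Lemma pairingZ_app h A B : pairingZ h (A ++ B) = (pairingZ h A + pairingZ h B)%Z.
Proof. induction A as [|[q z] A IH]; simpl; [ring | rewrite IH; ring]. Qed.

Lemma pairing_scale h k A : pairing h (div_scale k A) = IZR k * pairing h A.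
Proof. induction A as [|[q z] A IH]; simpl; [ring | rewrite IH, mult_IZR; ring]. Qed.

Lemma pairingZ_scale h k A : pairingZ h (div_scale k A) = (k * pairingZ h A)%Z.
Proof. induction A as [|[q z] A IH]; simpl; [ring | rewrite IH; ring]. Qed.

Lemma pairing_sub h A B : pairing h (div_sub A B) = pairing h A - pairing h B.
Proof. unfold div_sub. rewrite pairing_app, pairing_scale. simpl. ring. Qed.

Lemma pairingZ_sub h A B : pairingZ h (div_sub A B) = (pairingZ h A - pairingZ h B)%Z.
Proof. unfold div_sub. rewrite pairingZ_app, pairingZ_scale. ring. Qed.

Lemma pairing_ext h1 h2 A : (forall p, h1 p = h2 p) -> pairing h1 A = pairing h2 A.
Proof. intros H. induction A as [|[q z] A IH]; simpl; [ring | rewrite IH, H; ring]. Qed.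

Lemma pairingZ_ext h1 h2 A : (forall p, h1 p = h2 p) -> pairingZ h1 A = pairingZ h2 A.
Proof. intros H. induction A as [|[q z] A IH]; simpl; [ring | rewrite IH, H; ring]. Qed.

Lemma pairing_plus h1 h2 A :
  pairing (fun p => h1 p + h2 p) A = pairing h1 A + pairing h2 A.
Proof. induction A as [|[q z] A IH]; simpl; [ring | rewrite IH; ring]. Qed.

Lemma pairing_mulc c h A : pairing (fun p => c * h p) A = c * pairing h A.
Proof. induction A as [|[q z] A IH]; simpl; [ring | rewrite IH; ring]. Qed.

Lemma pairingZ_plus h1 h2 A :
  pairingZ (fun p => h1 p + h2 p)%Z A = (pairingZ h1 A + pairingZ h2 A)%Z.
Proof. induction A as [|[q z] A IH]; simpl; [ring | rewrite IH; ring]. Qed.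

Lemma pairingZ_minus h1 h2 A :
  pairingZ (fun p => h1 p - h2 p)%Z A = (pairingZ h1 A - pairingZ h2 A)%Z.
Proof. induction A as [|[q z] A IH]; simpl; [ring | rewrite IH; ring]. Qed.

Lemma pairing_IZR h A : pairing (fun p => IZR (h p)) A = IZR (pairingZ h A).
Proof.
  induction A as [|[q z] A IH]; simpl; [ring | rewrite IH, plus_IZR, mult_IZR; ring].
Qed.

Lemma pairing_single h p c : pairing h ((p, c) :: nil) = IZR c * h p.
Proof. simpl. ring. Qed.

Lemma deg_pairingZ A : deg A = pairingZ (fun _ => 1%Z) A.
Proof. induction A as [|[q z] A IH]; simpl; [ring | rewrite IH; ring]. Qed.

Lemma deg_pairing A : IZR (deg A) = pairing (fun _ => 1) A.
Proof. rewrite deg_pairingZ, <- pairing_IZR. reflexivity. Qed.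

Lemma deg_app A B : deg (A ++ B) = (deg A + deg B)%Z.
Proof. rewrite !deg_pairingZ. apply pairingZ_app. Qed.

Lemma deg_sub A B : deg (div_sub A B) = (deg A - deg B)%Z.
Proof. rewrite !deg_pairingZ. apply pairingZ_sub. Qed.

Lemma coef_app A B p : coef (A ++ B) p = (coef A p + coef B p)%Z.
Proof.
  induction A as [|[q z] A IH]; simpl; [ring |].
  destruct point_eq_dec; simpl; rewrite IH; ring.
Qed.

Lemma coef_scale k A p : coef (div_scale k A) p = (k * coef A p)%Z.
Proof.
  induction A as [|[q z] A IH]; simpl; [ring |].
  destruct point_eq_dec; simpl; rewrite IH; ring.
Qed.

Lemma coef_sub A B p : coef (div_sub A B) p = (coef A p - coef B p)%Z.
Proof. unfold div_sub. rewrite coef_app, coef_scale. ring. Qed.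

Lemma coef_single p c q : coef ((p, c) :: nil) q = if point_eq_dec p q then c else 0%Z.
Proof. simpl. destruct point_eq_dec; ring. Qed.

Lemma coef_notin A p : (forall q z, In (q, z) A -> q <> p) -> coef A p = 0%Z.
Proof.
  induction A as [|[q z] A IH]; simpl; intros H; [reflexivity |].
  destruct point_eq_dec as [e|e]; simpl in e.
  - exfalso; eapply H; eauto.
  - apply IH. intros; eapply H; eauto.
Qed.

Lemma valid_coef0 g l m D p : valid_div g l m D -> ~ valid_point g l m p -> coef D p = 0%Z.
Proof. intros HD Hp. apply coef_notin. intros q z Hq ->. apply Hp. eapply HD; eauto. Qed.

Lemma coef_map_one (P : nat -> point) (c : nat -> Z) L k0 p :
  NoDup L -> In k0 L -> P k0 = p -> (forall k, In k L -> k <> k0 -> P k <> p) ->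
  coef (map (fun k => (P k, c k)) L) p = c k0.
Proof.
  induction L as [|k L IH]; intros ND Hin HP Hne; [destruct Hin |].
  inversion ND; subst. simpl. destruct Hin as [->|Hin].
  - destruct point_eq_dec; [| congruence]. simpl.
    rewrite coef_notin; [ring |]. intros q z Hq. apply in_map_iff in Hq.
    destruct Hq as [k' [E Hk']]. inversion E; subst. apply Hne; [right; auto |].
    intros ->. contradiction.
  - destruct point_eq_dec as [e|e]; simpl in e.
    + exfalso. eapply Hne; [left; reflexivity | intros -> | auto]. contradiction.
    + apply IH; auto. intros; apply Hne; auto. right; auto.
Qed.

Lemma coef_flat_map (F : nat -> divisor) L i p :
  (forall i', In i' L -> i' <> i -> forall q z, In (q, z) (F i') -> q <> p) ->
  NoDup L -> In i L -> coef (flat_map F L) p = coef (F i) p.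
Proof.
  induction L as [|i' L IH]; intros H ND Hin; [destruct Hin |]. inversion ND; subst.
  simpl. rewrite coef_app. destruct Hin as [->|Hin].
  - rewrite (coef_notin (flat_map F L)); [ring |]. intros q z Hq. apply in_flat_map in Hq.
    destruct Hq as [i'' [Hi'' Hq]]. refine (H i'' (or_intror Hi'') _ q z Hq).
    intros ->. contradiction.
  - rewrite (coef_notin (F i')).
    + rewrite IH; auto. intros i'' Hi'' Hne q z Hq. exact (H i'' (or_intror Hi'') Hne q z Hq).
    + intros q z Hq. refine (H i' (or_introl eq_refl) _ q z Hq). intros ->. contradiction.
Qed.

Definition drop_point (q : point) (D : divisor) : divisor :=
  filter (fun qz => if point_eq_dec (fst qz) q then false else true) D.

Lemma pairing_split h q D : pairing h D = IZR (coef D q) * h q + pairing h (drop_point q D).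
Proof.
  induction D as [|[p z] D IH]; simpl; [ring |].
  destruct (point_eq_dec p q) as [e|e]; simpl.
  - subst. rewrite IH, plus_IZR. ring.
  - rewrite IH. ring.
Qed.

Lemma pairingZ_split h q D : pairingZ h D = (coef D q * h q + pairingZ h (drop_point q D))%Z.
Proof.
  induction D as [|[p z] D IH]; simpl; [ring |].
  destruct (point_eq_dec p q) as [e|e]; simpl.
  - subst. rewrite IH. ring.
  - rewrite IH. ring.
Qed.

Lemma coef_drop_point q D p :
  coef (drop_point q D) p = if point_eq_dec p q then 0%Z else coef D p.
Proof.
  induction D as [|[r z] D IH]; simpl.
  - destruct point_eq_dec; reflexivity.
  - destruct (point_eq_dec r q) as [e|e]; simpl.
    + subst. rewrite IH.
      destruct (point_eq_dec p q), (point_eq_dec q p); subst; try ring; congruence.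
    + destruct (point_eq_dec r p) as [e'|e']; simpl; rewrite IH;
        destruct (point_eq_dec p q); subst; try ring; congruence.
Qed.

Lemma drop_point_length q z D : (length (drop_point q ((q, z) :: D)) <= length D)%nat.
Proof.
  unfold drop_point. simpl. destruct point_eq_dec; [| congruence].
  apply filter_length_le.
Qed.

Lemma divisor_ind (P : divisor -> Prop) :
  P nil ->
  (forall q z D, (forall D', (length D' <= length D)%nat -> P D') -> P ((q, z) :: D)) ->
  forall D, P D.
Proof.
  intros H0 HS. assert (forall n D, (length D <= n)%nat -> P D).
  { induction n; intros D HD.
    - destruct D; [exact H0 | simpl in HD; lia].
    - destruct D as [|[q z] D]; [exact H0 |]. apply HS. intros D' HD'.
      apply IHn. simpl in HD. lia. }
  intros D; eapply H; eauto.
Qed.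

Lemma pairing_zero h D : (forall p, coef D p = 0%Z) -> pairing h D = 0.
Proof.
  induction D as [|q z D IH] using divisor_ind; intros Hc; [reflexivity |].
  rewrite (pairing_split h q), Hc, IH; [ring | apply drop_point_length |].
  intros p. rewrite coef_drop_point. destruct point_eq_dec; auto.
Qed.

Lemma pairing_coef_eq h D D' : (forall p, coef D p = coef D' p) -> pairing h D = pairing h D'.
Proof.
  intros Hc. apply Rminus_diag_uniq. rewrite <- pairing_sub. apply pairing_zero.
  intros p. rewrite coef_sub, Hc. apply Z.sub_diag.
Qed.

Lemma pairingZ_nonneg h D :
  (forall p, 0 <= coef D p)%Z -> (forall p, 0 <= h p)%Z -> (0 <= pairingZ h D)%Z.
Proof.
  intros Hc Hh. induction D as [|q z D IH] using divisor_ind; [simpl; lia |].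
  rewrite (pairingZ_split h q).
  assert (0 <= pairingZ h (drop_point q ((q, z) :: D)))%Z.
  { apply IH; [apply drop_point_length |]. intros p. rewrite coef_drop_point.
    destruct point_eq_dec; [lia | auto]. }
  specialize (Hc q). specialize (Hh q). nia.
Qed.

Lemma pairing_vanishes_off_support A f D :
  (forall p, 0 <= coef D p)%Z -> (forall p, 0 <= A p)%Z ->
  pairingZ A D = 0%Z -> (forall p, A p = 0%Z -> f p = 0) -> pairing f D = 0.
Proof.
  intros Hc HA. induction D as [|q z D IH] using divisor_ind; intros H0 Hf; [reflexivity |].
  rewrite (pairing_split f q). rewrite (pairingZ_split A q) in H0.
  set (D1 := drop_point q ((q, z) :: D)) in *.
  assert (Hc1 : forall p, (0 <= coef D1 p)%Z).
  { intros p. unfold D1. rewrite coef_drop_point. destruct point_eq_dec; [lia | auto]. }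
  assert (0 <= pairingZ A D1)%Z by (apply pairingZ_nonneg; auto).
  assert (Hq := Hc q). assert (Ha := HA q).
  assert (Hz : (coef ((q, z) :: D) q * A q = 0)%Z) by nia.
  rewrite IH; [| apply drop_point_length | auto | lia | auto].
  apply Z.mul_eq_0 in Hz. destruct Hz as [Hz|Hz].
  - rewrite Hz. ring.
  - rewrite (Hf q Hz). ring.
Qed.

Definition sum_range (f : nat -> R) (a n : nat) : R :=
  fold_right (fun k acc => f k + acc) 0 (seq a n).

Lemma sum_range_S f a n : sum_range f a (S n) = sum_range f a n + f (a + n)%nat.
Proof.
  unfold sum_range. rewrite seq_S, fold_right_app. simpl.
  generalize (seq a n). induction l; simpl; [ring | rewrite IHl; ring].
Qed.

Lemma sum_range_ext f1 f2 a n :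
  (forall k, (a <= k < a + n)%nat -> f1 k = f2 k) -> sum_range f1 a n = sum_range f2 a n.
Proof.
  intros H. induction n; [reflexivity |].
  rewrite !sum_range_S, IHn, H; [reflexivity | lia | intros; apply H; lia].
Qed.

Lemma sum_range_shift f n : sum_range f 1 n = sum_range (fun j => f (S j)) 0 n.
Proof. induction n; [reflexivity |]. rewrite !sum_range_S, IHn. reflexivity. Qed.

Lemma sum_range_plus f1 f2 a n :
  sum_range (fun k => f1 k + f2 k) a n = sum_range f1 a n + sum_range f2 a n.
Proof. induction n; [unfold sum_range; simpl; ring |]. rewrite !sum_range_S, IHn. ring. Qed.

Lemma sum_range_mulc c f a n : sum_range (fun k => f k * c) a n = c * sum_range f a n.
Proof. induction n; [unfold sum_range; simpl; ring |]. rewrite !sum_range_S, IHn. ring. Qed.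

Lemma pairing_map h (P : nat -> point) (c : nat -> Z) a n :
  pairing h (map (fun k => (P k, c k)) (seq a n)) = sum_range (fun k => IZR (c k) * h (P k)) a n.
Proof.
  unfold sum_range. generalize (seq a n).
  induction l; simpl; [reflexivity | rewrite IHl; reflexivity].
Qed.

Lemma pairing_flat_map h (F : nat -> divisor) a n :
  pairing h (flat_map F (seq a n)) = sum_range (fun i => pairing h (F i)) a n.
Proof.
  unfold sum_range. generalize (seq a n).
  induction l; simpl; [reflexivity | rewrite pairing_app, IHl; reflexivity].
Qed.

Lemma telescope (T : nat -> Z) n :
  sum_range (fun j => IZR (T j - T (S j))) 0 n = IZR (T 0%nat - T n).
Proof.
  induction n; [unfold sum_range; simpl; rewrite Z.sub_diag; reflexivity |].
  rewrite sum_range_S, IHn. simpl. rewrite !minus_IZR. ring.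
Qed.

Lemma telescope_from_1 (s : nat -> Z) n :
  sum_range (fun k => IZR (s (k - 1)%nat - s k)) 1 n = IZR (s 0%nat - s n).
Proof.
  rewrite sum_range_shift.
  rewrite (sum_range_ext _ (fun k => IZR (s k - s (S k)))) by (intros; f_equal; f_equal; f_equal; lia).
  apply telescope.
Qed.

Definition PL_data (f : R -> R) (L : R) (n : nat) (x : nat -> R) (s : nat -> Z) : Prop :=
  x 0%nat = 0 /\ x n = L /\ (forall k, (k < n)%nat -> x k < x (S k)) /\
  (forall k, (k < n)%nat -> forall t, x k <= t <= x (S k) -> f t = f (x k) + IZR (s k) * (t - x k)).

Section PLData.
Variables (f : R -> R) (L : R) (n : nat) (x : nat -> R) (s : nat -> Z).
Hypothesis data : PL_data f L n x s.

Lemma PL_data_mono i j : (i < j <= n)%nat -> x i < x j.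
Proof.
  destruct data as (_ & _ & Hm & _). induction j; intros Hij; [lia |].
  destruct (Nat.eq_dec i j) as [->|Hne]; [apply Hm; lia |].
  apply Rlt_trans with (x j); [apply IHj; lia | apply Hm; lia].
Qed.

Lemma PL_data_inner k : (1 <= k < n)%nat -> 0 < x k < L.
Proof.
  intros Hk. destruct data as (H0 & HL & _).
  split; [rewrite <- H0 | rewrite <- HL]; apply PL_data_mono; lia.
Qed.

Lemma PL_data_pieces : 0 < L -> (1 <= n)%nat.
Proof. intros HL. destruct data as (H0 & H1 & _). destruct n; [| lia]. lra. Qed.

Lemma PL_data_right k : (k < n)%nat -> slope_right f (x k) (s k).
Proof.
  intros Hk. destruct data as (_ & _ & Hm & Hf).
  exists (x (S k) - x k). split; [specialize (Hm k Hk); lra |].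
  intros h Hh. rewrite (Hf k Hk (x k + h)) by lra. ring.
Qed.

Lemma PL_data_left k : (1 <= k <= n)%nat -> slope_left f (x k) (- s (k - 1)%nat).
Proof.
  intros Hk. destruct data as (_ & _ & Hm & Hf).
  assert (Hk' : (k - 1 < n)%nat) by lia.
  assert (E : S (k - 1) = k) by lia.
  assert (Hlt := Hm _ Hk'). rewrite E in Hlt.
  exists (x k - x (k - 1)%nat). split; [lra |].
  intros h Hh. rewrite (Hf _ Hk' (x k - h)), (Hf _ Hk' (x k)) by (rewrite E; lra).
  rewrite opp_IZR. ring.
Qed.

Lemma PL_data_between k t : (k < n)%nat -> x k < t < x (S k) ->
  slope_right f t (s k) /\ slope_left f t (- s k).
Proof.
  intros Hk Ht. destruct data as (_ & _ & _ & Hf). split.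
  - exists (x (S k) - t). split; [lra |]. intros h Hh.
    rewrite (Hf k Hk (t + h)), (Hf k Hk t) by lra. ring.
  - exists (t - x k). split; [lra |]. intros h Hh.
    rewrite (Hf k Hk (t - h)), (Hf k Hk t) by lra. rewrite opp_IZR. ring.
Qed.

Lemma PL_data_locate t : 0 <= t < L -> exists k, (k < n)%nat /\ x k <= t < x (S k).
Proof.
  destruct data as (H0 & HL & Hm & _). intros Ht. rewrite <- HL, <- H0 in Ht.
  clear - Hm Ht. induction n as [|n' IH]; [lra |].
  destruct (Rlt_le_dec t (x n')).
  - destruct IH as [k Hk]; [intros; apply Hm; lia | lra |]. exists k; split; [lia | tauto].
  - exists n'. split; [lia | lra].
Qed.

(* Summation by parts: Σ (s(k-1) - s k) x k over the inner breakpoints. *)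
Lemma PL_data_moment n' : (n' < n)%nat ->
  sum_range (fun k => IZR (s (k - 1)%nat - s k) * x k) 1 n' =
  f (x (S n')) - f (x 0%nat) - IZR (s n') * x (S n') + IZR (s 0%nat) * x 0%nat.
Proof.
  destruct data as (H0 & HL & Hm & Hf). induction n'; intros Hn.
  - unfold sum_range; simpl. rewrite (Hf 0%nat Hn (x 1%nat)); [ring |].
    specialize (Hm 0%nat Hn). lra.
  - rewrite sum_range_S, IHn' by lia.
    replace (1 + n' - 1)%nat with n' by lia. replace (1 + n')%nat with (S n') by lia.
    rewrite (Hf (S n') Hn (x (S (S n')))); [rewrite minus_IZR; ring |].
    specialize (Hm _ Hn). lra.
Qed.

End PLData.

Lemma slope_right_uniq f t a b : slope_right f t a -> slope_right f t b -> a = b.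
Proof.
  intros [e1 [He1 H1]] [e2 [He2 H2]]. set (h := Rmin e1 e2).
  assert (0 < h) by (unfold h; apply Rmin_glb_lt; lra).
  assert (h <= e1) by apply Rmin_l. assert (h <= e2) by apply Rmin_r.
  specialize (H1 h ltac:(lra)). specialize (H2 h ltac:(lra)).
  apply eq_IZR. apply Rmult_eq_reg_r with h; lra.
Qed.

Lemma slope_left_uniq f t a b : slope_left f t a -> slope_left f t b -> a = b.
Proof.
  intros [e1 [He1 H1]] [e2 [He2 H2]]. set (h := Rmin e1 e2).
  assert (0 < h) by (unfold h; apply Rmin_glb_lt; lra).
  assert (h <= e1) by apply Rmin_l. assert (h <= e2) by apply Rmin_r.
  specialize (H1 h ltac:(lra)). specialize (H2 h ltac:(lra)).
  apply eq_IZR. apply Rmult_eq_reg_r with h; lra.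
Qed.

Lemma ord_uniq g l m psi p a b : ord_is g l m psi p a -> ord_is g l m psi p b -> a = b.
Proof.
  destruct p as [j|i e t]; unfold ord_is.
  - intros (a1 & a2 & b1 & b2 & H1 & H2 & ->) (a1' & a2' & b1' & b2' & H1' & H2' & ->).
    assert (a1 = a1' /\ a2 = a2') as [-> ->].
    { destruct (1 <=? j)%nat; [destruct H1, H1' | lia].
      split; eapply slope_left_uniq; eauto. }
    assert (b1 = b1' /\ b2 = b2') as [-> ->].
    { destruct (j <? g)%nat; [destruct H2, H2' | lia].
      split; eapply slope_right_uniq; eauto. }
    reflexivity.
  - intros (s1 & s2 & H1 & H2 & ->) (s1' & s2' & H1' & H2' & ->).
    rewrite (slope_right_uniq _ _ _ _ H1 H1'), (slope_left_uniq _ _ _ _ H2 H2').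
    reflexivity.
Qed.

Lemma PL_choice g l m psi : is_PL g l m psi ->
  exists (nn : nat -> bool -> nat) (xx : nat -> bool -> nat -> R) (ss : nat -> bool -> nat -> Z),
    forall i e, (1 <= i <= g)%nat ->
      PL_data (edge_fun l m psi i e) (len l m i e) (nn i e) (xx i e) (ss i e).
Proof.
  intros HPL.
  destruct (choice (fun (ie : nat * bool) (y : nat * (nat -> R) * (nat -> Z)) =>
     (1 <= fst ie <= g)%nat ->
     PL_data (edge_fun l m psi (fst ie) (snd ie)) (len l m (fst ie) (snd ie))
       (fst (fst y)) (snd (fst y)) (snd y))) as [F HF].
  { intros [i e]. destruct (le_lt_dec 1 i); [destruct (le_lt_dec i g) |].
    - destruct (HPL i e ltac:(lia)) as (n & x & s & H). exists (n, x, s). intros _. exact H.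
    - exists (0%nat, fun _ => 0, fun _ => 0%Z). simpl. lia.
    - exists (0%nat, fun _ => 0, fun _ => 0%Z). simpl. lia. }
  exists (fun i e => fst (fst (F (i, e)))), (fun i e => snd (fst (F (i, e)))),
         (fun i e => snd (F (i, e))).
  intros i e Hi. apply (HF (i, e)). exact Hi.
Qed.

(** * The principal divisor of a PL function *)

(* Position on the k-th loop, as a real number modulo [l k + m k]:
   0 before loop k, signed arc length from v_{k-1} on loop k (positive along
   the ℓ-edge, negative along the m-edge), and [l k] from v_k onwards. *)
Definition pos (l : nat -> R) (k : nat) (p : point) : R :=
  match p with
  | Vtx j => if (k <=? j)%nat then l k else 0
  | Inn i e t => if (i <? k)%nat then 0 else if (k <? i)%nat then l k else if e then t else - t
  end.

Definition sigma (l : nat -> R) (k : nat) (D : divisor) : R := pairing (pos l k) D.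

Section PrincipalDivisor.
Variables (g : nat) (l m : nat -> R) (psi : point -> R).
Variables (nn : nat -> bool -> nat) (xx : nat -> bool -> nat -> R) (ss : nat -> bool -> nat -> Z).
Hypothesis lengths_pos : forall i, (1 <= i <= g)%nat -> 0 < l i /\ 0 < m i.
Hypothesis edge_data : forall i e, (1 <= i <= g)%nat ->
  PL_data (edge_fun l m psi i e) (len l m i e) (nn i e) (xx i e) (ss i e).

Definition end_slopes (j : nat) : Z :=
  if (1 <=? j)%nat then (ss j true (nn j true - 1)%nat + ss j false (nn j false - 1)%nat)%Z
  else 0%Z.

Definition start_slopes (j : nat) : Z := (ss j true 0%nat + ss j false 0%nat)%Z.

Definition vertex_order (j : nat) : Z :=
  (end_slopes j - if (j <? g)%nat then start_slopes (S j) else 0)%Z.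

Definition vertex_part : divisor := map (fun j => (Vtx j, vertex_order j)) (seq 0 (S g)).

Definition edge_part (i : nat) (e : bool) : divisor :=
  map (fun k => (Inn i e (xx i e k), (ss i e (k - 1)%nat - ss i e k)%Z)) (seq 1 (nn i e - 1)).

Definition interior_part : divisor :=
  flat_map (fun i => edge_part i true ++ edge_part i false) (seq 1 g).

Definition principal : divisor := vertex_part ++ interior_part.

Lemma len_pos i e : (1 <= i <= g)%nat -> 0 < len l m i e.
Proof. intros Hi. unfold len. destruct e; apply lengths_pos; auto. Qed.

Lemma in_edge_part i e q z : In (q, z) (edge_part i e) ->
  exists k, (1 <= k < nn i e)%nat /\ q = Inn i e (xx i e k).
Proof.
  unfold edge_part. intros H. apply in_map_iff in H. destruct H as [k [E Hk]].
  inversion E; subst. apply in_seq in Hk. exists k. split; [lia | reflexivity].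
Qed.

Lemma coef_vertex_part_vtx j : (j <= g)%nat -> coef vertex_part (Vtx j) = vertex_order j.
Proof.
  intros Hj. apply (coef_map_one Vtx vertex_order); [apply seq_NoDup | apply in_seq; lia |
    reflexivity |]. intros k _ Hk E. inversion E; auto.
Qed.

Lemma coef_vertex_part_inn i e t : coef vertex_part (Inn i e t) = 0%Z.
Proof.
  apply coef_notin. intros q z H. apply in_map_iff in H.
  destruct H as [k [E _]]. inversion E; subst. discriminate.
Qed.

Lemma coef_interior_part_vtx j : coef interior_part (Vtx j) = 0%Z.
Proof.
  apply coef_notin. intros q z H. apply in_flat_map in H.
  destruct H as [i [_ H]]. apply in_app_iff in H.
  destruct H as [H|H]; apply in_edge_part in H; destruct H as [k [_ ->]]; discriminate.
Qed.

Lemma coef_interior_part_inn i e t : (1 <= i <= g)%nat ->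
  coef interior_part (Inn i e t) = coef (edge_part i e) (Inn i e t).
Proof.
  intros Hi. unfold interior_part. rewrite (coef_flat_map _ _ i).
  - rewrite coef_app. destruct e;
      [rewrite (coef_notin (edge_part i false)) | rewrite (coef_notin (edge_part i true))];
      try ring; intros q z H; apply in_edge_part in H; destruct H as [k [_ ->]]; congruence.
  - intros i' _ Hne q z H. apply in_app_iff in H.
    destruct H as [H|H]; apply in_edge_part in H; destruct H as [k [_ ->]]; congruence.
  - apply seq_NoDup.
  - apply in_seq; lia.
Qed.

Lemma principal_valid : valid_div g l m principal.
Proof.
  intros q z H. apply in_app_iff in H. destruct H as [H|H].
  - apply in_map_iff in H. destruct H as [j [E Hj]]. inversion E; subst.
    apply in_seq in Hj. simpl. lia.
  - apply in_flat_map in H. destruct H as [i [Hi H]]. apply in_seq in Hi.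
    apply in_app_iff in H.
    destruct H as [H|H]; apply in_edge_part in H; destruct H as [k [Hk ->]];
      (split; [lia | eapply PL_data_inner; [apply edge_data; lia | lia]]).
Qed.

Lemma slope_at_start i e : (1 <= i <= g)%nat ->
  slope_right (edge_fun l m psi i e) 0 (ss i e 0%nat).
Proof.
  intros Hi. assert (H := edge_data i e Hi).
  pose proof (PL_data_pieces _ _ _ _ _ H (len_pos i e Hi)).
  pose proof (PL_data_right _ _ _ _ _ H 0%nat ltac:(lia)) as Hr.
  destruct H as (X0 & _). rewrite X0 in Hr. exact Hr.
Qed.

Lemma slope_at_end i e : (1 <= i <= g)%nat ->
  slope_left (edge_fun l m psi i e) (len l m i e) (- ss i e (nn i e - 1)%nat).
Proof.
  intros Hi. assert (H := edge_data i e Hi).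
  pose proof (PL_data_pieces _ _ _ _ _ H (len_pos i e Hi)).
  pose proof (PL_data_left _ _ _ _ _ H (nn i e) ltac:(lia)) as Hl.
  destruct H as (_ & XL & _). rewrite XL in Hl. exact Hl.
Qed.

Lemma principal_ord_vertex j : (j <= g)%nat ->
  ord_is g l m psi (Vtx j) (coef principal (Vtx j)).
Proof.
  intros Hj. unfold principal. rewrite coef_app, coef_vertex_part_vtx, coef_interior_part_vtx by lia.
  unfold ord_is, vertex_order, end_slopes, start_slopes.
  destruct (Nat.leb_spec 1 j); destruct (Nat.ltb_spec j g).
  - exists (- ss j true (nn j true - 1)%nat)%Z, (- ss j false (nn j false - 1)%nat)%Z,
      (ss (S j) true 0%nat), (ss (S j) false 0%nat).
    repeat split; try apply slope_at_end; try apply slope_at_start; try lia; ring.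
  - exists (- ss j true (nn j true - 1)%nat)%Z, (- ss j false (nn j false - 1)%nat)%Z, 0%Z, 0%Z.
    repeat split; try apply slope_at_end; try lia; ring.
  - exists 0%Z, 0%Z, (ss (S j) true 0%nat), (ss (S j) false 0%nat).
    repeat split; try apply slope_at_start; try lia; ring.
  - exists 0%Z, 0%Z, 0%Z, 0%Z. repeat split; ring.
Qed.

Lemma principal_ord_interior i e t : (1 <= i <= g)%nat -> 0 < t < len l m i e ->
  ord_is g l m psi (Inn i e t) (coef principal (Inn i e t)).
Proof.
  intros Hi Ht. unfold principal.
  rewrite coef_app, coef_vertex_part_inn, coef_interior_part_inn by lia. simpl.
  assert (H := edge_data i e Hi).
  destruct (classic (exists k, (1 <= k < nn i e)%nat /\ xx i e k = t)) as [[k [Hk Ek]]|Hno].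
  -
    unfold edge_part.
    rewrite (coef_map_one (fun k => Inn i e (xx i e k))
               (fun k => (ss i e (k - 1)%nat - ss i e k)%Z) _ k);
      [| apply seq_NoDup | apply in_seq; lia | rewrite Ek; reflexivity |].
    + exists (ss i e k), (- ss i e (k - 1)%nat)%Z. rewrite <- Ek.
      split; [apply (PL_data_right _ _ _ _ _ H); lia |].
      split; [apply (PL_data_left _ _ _ _ _ H); lia | ring].
    + intros k' Hk' Hne E. inversion E. apply in_seq in Hk'.
      destruct (Nat.lt_total k k') as [Hl|[Hl|Hl]]; [| lia |].
      * pose proof (PL_data_mono _ _ _ _ _ H k k' ltac:(lia)). lra.
      * pose proof (PL_data_mono _ _ _ _ _ H k' k ltac:(lia)). lra.
  -
    rewrite coef_notin.
    + destruct (PL_data_locate _ _ _ _ _ H t ltac:(lra)) as [k [Hk Hx]].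
      assert (xx i e k <> t).
      { intros E. destruct k; [destruct H as (H0 & _); lra |].
        apply Hno. exists (S k). split; [lia | auto]. }
      destruct (PL_data_between _ _ _ _ _ H k t Hk ltac:(lra)) as [Hr Hl].
      exists (ss i e k), (- ss i e k)%Z. split; [exact Hr | split; [exact Hl | ring]].
    + intros q z Hq. apply in_edge_part in Hq. destruct Hq as [k [Hk ->]]. intros E.
      inversion E. apply Hno. exists k. auto.
Qed.

Lemma principal_ord p : valid_point g l m p -> ord_is g l m psi p (coef principal p).
Proof.
  destruct p as [j|i e t]; simpl; intros Hp.
  - apply principal_ord_vertex; lia.
  - apply principal_ord_interior; tauto.
Qed.

Definition loop_pairing (h : point -> R) (i : nat) : R :=
  pairing h (edge_part i true) + pairing h (edge_part i false).

Lemma principal_pairing h :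
  pairing h principal =
  sum_range (fun j => IZR (vertex_order j) * h (Vtx j) + loop_pairing h (S j)) 0 g +
  IZR (vertex_order g) * h (Vtx g).
Proof.
  unfold principal, vertex_part, interior_part.
  rewrite pairing_app, pairing_map, pairing_flat_map, sum_range_S, sum_range_shift,
    sum_range_plus. simpl. unfold loop_pairing.
  rewrite (sum_range_ext (fun j => pairing h (_ ++ _)) _ 0 g) by (intros; apply pairing_app).
  ring.
Qed.

Lemma edge_pairing_const h c i e : (1 <= i <= g)%nat ->
  (forall t, h (Inn i e t) = c) ->
  pairing h (edge_part i e) = c * IZR (ss i e 0%nat - ss i e (nn i e - 1)%nat).
Proof.
  intros Hi Hh. unfold edge_part. rewrite pairing_map.
  rewrite (sum_range_ext _ (fun k => IZR (ss i e (k - 1)%nat - ss i e k) * c))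
    by (intros; rewrite Hh; reflexivity).
  rewrite sum_range_mulc, telescope_from_1. reflexivity.
Qed.

Lemma edge_pairing_linear h c i e : (1 <= i <= g)%nat ->
  (forall t, h (Inn i e t) = c * t) ->
  pairing h (edge_part i e) =
  c * (psi (Vtx i) - psi (Vtx (i - 1)) - IZR (ss i e (nn i e - 1)%nat) * len l m i e).
Proof.
  intros Hi Hh. assert (H := edge_data i e Hi). assert (HL := len_pos i e Hi).
  pose proof (PL_data_pieces _ _ _ _ _ H HL). unfold edge_part. rewrite pairing_map.
  rewrite (sum_range_ext _ (fun k => IZR (ss i e (k - 1)%nat - ss i e k) * xx i e k * c))
    by (intros; rewrite Hh; ring).
  rewrite sum_range_mulc, (PL_data_moment _ _ _ _ _ H) by lia.
  replace (S (nn i e - 1)) with (nn i e) by lia. destruct H as (X0 & X1 & _).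
  rewrite X0, X1. unfold edge_fun.
  destruct (Req_EM_T 0 0); [| lra]. destruct (Req_EM_T (len l m i e) 0); [lra |].
  destruct (Req_EM_T (len l m i e) (len l m i e)); [ring | lra].
Qed.

Lemma loop_pairing_const h c i : (1 <= i <= g)%nat -> (forall e t, h (Inn i e t) = c) ->
  loop_pairing h i = c * IZR (start_slopes i - end_slopes i).
Proof.
  intros Hi Hh. unfold loop_pairing, start_slopes, end_slopes.
  rewrite !(edge_pairing_const h c) by auto.
  replace (1 <=? i)%nat with true by (symmetry; apply Nat.leb_le; lia).
  rewrite !minus_IZR, !plus_IZR. ring.
Qed.

Lemma principal_deg : (1 <= g)%nat -> pairing (fun _ => 1) principal = 0.
Proof.
  intros Hg. rewrite principal_pairing.
  rewrite (sum_range_ext _ (fun j => IZR (end_slopes j - end_slopes (S j)))).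
  - rewrite telescope. unfold vertex_order, end_slopes. rewrite Nat.ltb_irrefl.
    destruct g; [lia |]. simpl. rewrite opp_IZR, Z.sub_0_r. ring.
  - intros j Hj. rewrite (loop_pairing_const _ 1) by (auto; lia).
    unfold vertex_order. replace (j <? g)%nat with true by (symmetry; apply Nat.ltb_lt; lia).
    rewrite !minus_IZR. ring.
Qed.

Section AtLoop.
Variable k : nat.
Hypothesis Hk : (1 <= k <= g)%nat.

Lemma loop_pairing_before i : (1 <= i < k)%nat -> loop_pairing (pos l k) i = 0.
Proof.
  intros Hi. rewrite (loop_pairing_const _ 0) by (try lia; intros e t; simpl;
    replace (i <? k)%nat with true by (symmetry; apply Nat.ltb_lt; lia); reflexivity).
  ring.
Qed.

Lemma loop_pairing_after i : (k < i <= g)%nat ->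
  loop_pairing (pos l k) i = l k * IZR (start_slopes i - end_slopes i).
Proof.
  intros Hi. apply loop_pairing_const; [lia |]. intros e t; simpl.
  replace (i <? k)%nat with false by (symmetry; apply Nat.ltb_ge; lia).
  replace (k <? i)%nat with true by (symmetry; apply Nat.ltb_lt; lia). reflexivity.
Qed.

(* On loop k itself the contributions of psi's values cancel between the two edges. *)
Lemma loop_pairing_at : loop_pairing (pos l k) k =
  - IZR (ss k true (nn k true - 1)%nat) * l k + IZR (ss k false (nn k false - 1)%nat) * m k.
Proof.
  unfold loop_pairing.
  rewrite (edge_pairing_linear _ 1), (edge_pairing_linear _ (-1)); auto;
    try (intros t; simpl; rewrite Nat.ltb_irrefl; ring).
  unfold len. ring.
Qed.

Lemma principal_sigma_partial n : (n <= g)%nat ->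
  sum_range (fun j => IZR (vertex_order j) * pos l k (Vtx j) + loop_pairing (pos l k) (S j)) 0 n =
  if (n <? k)%nat then 0
  else loop_pairing (pos l k) k + l k * IZR (end_slopes k - end_slopes n).
Proof.
  induction n; intros Hn.
  - replace (0 <? k)%nat with true by (symmetry; apply Nat.ltb_lt; lia). reflexivity.
  - rewrite sum_range_S, IHn by lia. simpl (0 + n)%nat. cbn [pos].
    unfold vertex_order. replace (n <? g)%nat with true by (symmetry; apply Nat.ltb_lt; lia).
    destruct (Nat.lt_total (S n) k) as [Hl|[Hl|Hl]].
    + replace (n <? k)%nat with true by (symmetry; apply Nat.ltb_lt; lia).
      replace (S n <? k)%nat with true by (symmetry; apply Nat.ltb_lt; lia).
      replace (k <=? n)%nat with false by (symmetry; apply Nat.leb_gt; lia).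
      rewrite (loop_pairing_before (S n)) by lia. ring.
    + replace (n <? k)%nat with true by (symmetry; apply Nat.ltb_lt; lia).
      replace (S n <? k)%nat with false by (symmetry; apply Nat.ltb_ge; lia).
      replace (k <=? n)%nat with false by (symmetry; apply Nat.leb_gt; lia).
      rewrite Hl, Z.sub_diag. ring.
    + replace (n <? k)%nat with false by (symmetry; apply Nat.ltb_ge; lia).
      replace (S n <? k)%nat with false by (symmetry; apply Nat.ltb_ge; lia).
      replace (k <=? n)%nat with true by (symmetry; apply Nat.leb_le; lia).
      rewrite (loop_pairing_after (S n)) by lia. rewrite !minus_IZR. ring.
Qed.

Lemma principal_sigma :
  sigma l k principal = IZR (ss k false (nn k false - 1)%nat) * (l k + m k).
Proof.
  unfold sigma. rewrite principal_pairing, principal_sigma_partial by lia.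
  replace (g <? k)%nat with false by (symmetry; apply Nat.ltb_ge; lia).
  cbn [pos]. replace (k <=? g)%nat with true by (symmetry; apply Nat.leb_le; lia).
  rewrite loop_pairing_at. unfold vertex_order, end_slopes. rewrite Nat.ltb_irrefl.
  replace (1 <=? k)%nat with true by (symmetry; apply Nat.leb_le; lia).
  rewrite !minus_IZR, !plus_IZR. ring.
Qed.

End AtLoop.
End PrincipalDivisor.

(** * Invariants of linear equivalence *)

Definition multiple_of (x c : R) : Prop := exists q : Z, x = IZR q * c.

Lemma linear_equiv_invariants g l m D D' :
  (1 <= g)%nat -> (forall i, (1 <= i <= g)%nat -> 0 < l i /\ 0 < m i) ->
  valid_div g l m D -> valid_div g l m D' -> lin_equiv g l m D D' ->
  deg D = deg D' /\
  forall k, (1 <= k <= g)%nat -> multiple_of (sigma l k D - sigma l k D') (l k + m k).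
Proof.
  intros Hg Hlm HD HD' [psi [HPL Hord]].
  destruct (PL_choice g l m psi HPL) as (nn & xx & ss & HP).
  set (P := principal g nn xx ss).
  assert (Hcoef : forall p, coef (div_sub D D') p = coef P p).
  { intros p. rewrite coef_sub. destruct (classic (valid_point g l m p)) as [Hp|Hp].
    - exact (ord_uniq _ _ _ _ _ _ _ (Hord p Hp) (principal_ord g l m psi nn xx ss Hlm HP p Hp)).
    - rewrite !(valid_coef0 g l m _ p); auto. apply (principal_valid g l m psi); auto. }
  assert (Key : forall h, pairing h D - pairing h D' = pairing h P).
  { intros h. rewrite <- pairing_sub. apply pairing_coef_eq. exact Hcoef. }
  split.
  - apply eq_IZR, Rminus_diag_uniq. rewrite !deg_pairing, Key.
    apply (principal_deg g l m psi); auto.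
  - intros k Hk. exists (ss k false (nn k false - 1)%nat). unfold sigma. rewrite Key.
    apply (principal_sigma g l m psi); auto.
Qed.

Lemma multiple_add x y c : multiple_of x c -> multiple_of y c -> multiple_of (x + y) c.
Proof. intros [a Ha] [b Hb]. exists (a + b)%Z. rewrite plus_IZR. subst. ring. Qed.

Lemma multiple_opp x c : multiple_of x c -> multiple_of (- x) c.
Proof. intros [a Ha]. exists (- a)%Z. rewrite opp_IZR. subst. ring. Qed.

Lemma multiple_sub x y c : multiple_of x c -> multiple_of y c -> multiple_of (x - y) c.
Proof. intros. apply multiple_add; auto. apply multiple_opp; auto. Qed.

Lemma multiple_mulZ k x c : multiple_of x c -> multiple_of (IZR k * x) c.
Proof. intros [a Ha]. exists (k * a)%Z. rewrite mult_IZR. subst. ring. Qed.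

Lemma multiple_zero c : multiple_of 0 c.
Proof. exists 0%Z. ring. Qed.

Lemma multiple_eq x y c : x = y -> multiple_of x c -> multiple_of y c.
Proof. intros ->; auto. Qed.

Lemma not_multiple_small x c : 0 < x < c -> ~ multiple_of x c.
Proof.
  intros H [q Hq]. subst. assert (0 < IZR q) by nra. assert (IZR q < 1) by nra.
  apply lt_IZR in H0. apply lt_IZR in H1. lia.
Qed.

(* On a generic loop, N·ℓ_k is never a multiple of ℓ_k + m_k for 0 < N ≤ 2g-2:
   otherwise N·ℓ_k = q(ℓ_k+m_k) with 0 < q < N, i.e. ℓ_k/m_k = q/(N-q). *)
Lemma generic_not_multiple_pos g l m k N : generic g l m -> (1 <= k <= g)%nat ->
  0 < l k -> 0 < m k -> (0 < N <= 2 * Z.of_nat g - 2)%Z ->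
  ~ multiple_of (IZR N * l k) (l k + m k).
Proof.
  intros Hgen Hk Hl Hm HN [q Hq].
  assert (0 < IZR N) by (apply IZR_lt; lia).
  assert (Hq0 : (0 < q)%Z) by (apply lt_IZR; nra).
  assert (Hq1 : (q < N)%Z).
  { apply lt_IZR. assert (0 < IZR q) by (apply IZR_lt; lia). nra. }
  apply (Hgen k Hk (Z.to_nat q) (Z.to_nat (N - q))); try lia.
  rewrite !INR_IZR_INZ, !Z2Nat.id, minus_IZR by lia.
  assert (0 < IZR N - IZR q) by (rewrite <- minus_IZR; apply IZR_lt; lia).
  field_simplify_eq; [nra | lra].
Qed.

Lemma generic_not_multiple g l m k N : generic g l m -> (1 <= k <= g)%nat ->
  0 < l k -> 0 < m k -> N <> 0%Z -> (Z.abs N <= 2 * Z.of_nat g - 2)%Z ->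
  ~ multiple_of (IZR N * l k) (l k + m k).
Proof.
  intros Hgen Hk Hl Hm HN HN2 Hc. destruct (Z_lt_le_dec 0 N).
  - eapply generic_not_multiple_pos; eauto. lia.
  - apply (generic_not_multiple_pos g l m k (- N)); auto; [lia |].
    eapply multiple_eq; [| apply multiple_opp; exact Hc]. rewrite opp_IZR. ring.
Qed.

(** * Lattice walks along the chain *)

(* Given coordinates [tau i] (one per loop), a walk visits the loops in
   decreasing order and keeps its height v at loop i exactly when v "lands"
   on tau i, i.e. tau i ≡ v·ℓ_i mod (ℓ_i + m_i); otherwise it goes up by one. *)
Section Walks.
Variables l m : nat -> R.

Definition lands (tau : nat -> R) (i : nat) (v : Z) : Prop :=
  multiple_of (tau i - IZR v * l i) (l i + m i).

Definition walk_step (tau : nat -> R) (i : nat) (v : Z) : Z :=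
  if excluded_middle_informative (lands tau i v) then v else (v + 1)%Z.

(* [walk tau i v n]: start at height v at loop i and take n steps (loops i, i-1, ...). *)
Fixpoint walk (tau : nat -> R) (i : nat) (v : Z) (n : nat) : Z :=
  match n with
  | O => v
  | S n' => walk_step tau (i - n') (walk tau i v n')
  end.

Definition bound_step (sg : nat -> R) (k : nat) (M : Z) : Z :=
  if excluded_middle_informative (lands sg k M) then M else (M - 1)%Z.

(* [start_bound sg d k] bounds the starting heights at loop k of walks over
   loops k, ..., 1 ending at height at most d (see [walk_start_bound]). *)
Fixpoint start_bound (sg : nat -> R) (d : Z) (k : nat) : Z :=
  match k with
  | O => d
  | S k' => bound_step sg (S k') (start_bound sg d k')
  end.

Lemma walk_step_bounds tau i v : (v <= walk_step tau i v <= v + 1)%Z.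
Proof. unfold walk_step. destruct excluded_middle_informative; lia. Qed.

Lemma walk_bounds tau i v n : (v <= walk tau i v n <= v + Z.of_nat n)%Z.
Proof.
  induction n; simpl; [lia |].
  pose proof (walk_step_bounds tau (i - n) (walk tau i v n)). lia.
Qed.

Lemma start_bound_S sg d k :
  (start_bound sg d k - 1 <= start_bound sg d (S k) <= start_bound sg d k)%Z.
Proof. simpl. unfold bound_step. destruct excluded_middle_informative; lia. Qed.

Lemma start_bound_le sg d k : (start_bound sg d k <= d)%Z.
Proof. induction k; simpl; [lia |]. unfold bound_step. destruct excluded_middle_informative; lia. Qed.

Lemma walk_compose tau i v a b : (a <= i)%nat ->
  walk tau i v (a + b) = walk tau (i - a) (walk tau i v a) b.
Proof.
  intros Ha. induction b; [rewrite Nat.add_0_r; reflexivity |].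
  rewrite Nat.add_succ_r. simpl. rewrite IHb. f_equal. lia.
Qed.

Lemma walk_cong tau tau' i v n :
  (forall n', (n' < n)%nat ->
     multiple_of (tau (i - n')%nat - tau' (i - n')%nat) (l (i - n')%nat + m (i - n')%nat)) ->
  walk tau i v n = walk tau' i v n.
Proof.
  intros H. induction n; [reflexivity |]. simpl. rewrite IHn by (intros; apply H; lia).
  assert (Hc := H n ltac:(lia)). unfold walk_step, lands.
  destruct excluded_middle_informative as [c|c];
    destruct excluded_middle_informative as [c'|c']; auto; exfalso.
  - apply c'. eapply multiple_eq; [| apply (multiple_sub _ _ _ c Hc)]. ring.
  - apply c. eapply multiple_eq; [| apply (multiple_add _ _ _ c' Hc)]. ring.
Qed.

Lemma walk_shift tau tau' i v n :
  (forall n', (n' < n)%nat -> tau' (i - n')%nat = tau (i - n')%nat - l (i - n')%nat) ->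
  walk tau' i v n = (walk tau i (v + 1) n - 1)%Z.
Proof.
  intros H. induction n; simpl; [ring |]. rewrite IHn by (intros; apply H; lia).
  unfold walk_step, lands. rewrite H by lia.
  replace (tau (i - n)%nat - l (i - n)%nat - IZR (walk tau i (v + 1) n - 1) * l (i - n)%nat)
    with (tau (i - n)%nat - IZR (walk tau i (v + 1) n) * l (i - n)%nat)
    by (rewrite minus_IZR; ring).
  destruct excluded_middle_informative; ring.
Qed.

Lemma walk_start_bound sg d j v : (walk sg j v j <= d)%Z -> (v <= start_bound sg d j)%Z.
Proof.
  revert v. induction j; intros v H; [exact H |].
  change (walk sg (S j) v (S j)) with (walk sg (S j) v (1 + j)) in H.
  rewrite walk_compose in H by lia. replace (S j - 1)%nat with j in H by lia.
  simpl in H. replace (S j - 0)%nat with (S j) in H by lia.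
  apply IHj in H. unfold walk_step in H. simpl. unfold bound_step.
  destruct (excluded_middle_informative (lands sg (S j) v)) as [c|c].
  - destruct (Z.eq_dec v (start_bound sg d j)) as [E|E].
    + rewrite <- E. destruct excluded_middle_informative; [lia | contradiction].
    + destruct excluded_middle_informative; lia.
  - destruct excluded_middle_informative; lia.
Qed.

End Walks.

Definition after_loop (k : nat) (p : point) : Z :=
  match p with
  | Vtx j => if (k <? j)%nat then 1%Z else 0%Z
  | Inn i _ _ => if (k <? i)%nat then 1%Z else 0%Z
  end.

Definition on_loop (k : nat) (p : point) : Z :=
  match p with
  | Vtx j => if (j =? k)%nat then 1%Z else 0%Z
  | Inn i _ _ => if (i =? k)%nat then 1%Z else 0%Z
  end.

Definition pos_on_loop (l : nat -> R) (k : nat) (p : point) : R :=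
  match p with
  | Vtx j => if (j =? k)%nat then l k else 0
  | Inn i e t => if (i =? k)%nat then (if e then t else - t) else 0
  end.

Lemma after_loop_pred k p : (1 <= k)%nat -> after_loop (k - 1) p = (after_loop k p + on_loop k p)%Z.
Proof.
  intros Hk. destruct p as [j|i e t]; simpl;
    [destruct (Nat.ltb_spec (k - 1) j), (Nat.ltb_spec k j), (Nat.eqb_spec j k)
    |destruct (Nat.ltb_spec (k - 1) i), (Nat.ltb_spec k i), (Nat.eqb_spec i k)]; lia.
Qed.

Lemma pos_decompose l k p : pos l k p = IZR (after_loop k p) * l k + pos_on_loop l k p.
Proof.
  destruct p as [j|i e t]; simpl.
  - destruct (Nat.leb_spec k j), (Nat.ltb_spec k j), (Nat.eqb_spec j k);
      try lia; subst; ring.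
  - destruct (Nat.ltb_spec i k), (Nat.ltb_spec k i), (Nat.eqb_spec i k); try lia; ring.
Qed.

Lemma after_loop_nonneg k p : (0 <= after_loop k p)%Z.
Proof. destruct p; simpl; destruct Nat.ltb; lia. Qed.

Lemma on_loop_nonneg k p : (0 <= on_loop k p)%Z.
Proof. destruct p; simpl; destruct Nat.eqb; lia. Qed.

(* One step of the walk of an effective divisor E: if the walk is at most the
   number of chips after loop k, then after loop k it is at most the number of
   chips after loop k-1.  If loop k carries no chip, the coordinate of E is
   exactly (#chips after loop k)·ℓ_k, so the walk lands there. *)
Lemma effective_walk_step l m E k v : effective E -> (1 <= k)%nat ->
  (v <= pairingZ (after_loop k) E)%Z ->
  (walk_step l m (fun i => sigma l i E) k v <= pairingZ (after_loop (k - 1)) E)%Z.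
Proof.
  intros HE Hk Hv.
  rewrite (pairingZ_ext _ (fun p => after_loop k p + on_loop k p)%Z)
    by (intros; apply after_loop_pred; auto).
  rewrite pairingZ_plus.
  assert (HA : (0 <= pairingZ (on_loop k) E)%Z)
    by (apply pairingZ_nonneg; [exact HE | apply on_loop_nonneg]).
  pose proof (walk_step_bounds l m (fun i => sigma l i E) k v).
  destruct (Z.eq_dec (pairingZ (on_loop k) E) 0) as [H0|H0]; [| lia].
  assert (Hp : pairing (pos_on_loop l k) E = 0).
  { apply (pairing_vanishes_off_support (on_loop k)); auto; [apply on_loop_nonneg |].
    intros p; destruct p; simpl; destruct Nat.eqb; auto; discriminate. }
  assert (Ht : sigma l k E = IZR (pairingZ (after_loop k) E) * l k).
  { unfold sigma. rewrite (pairing_ext _ _ _ (pos_decompose l k)), pairing_plus, Hp.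
    rewrite <- pairing_IZR.
    rewrite (pairing_ext _ (fun p => l k * IZR (after_loop k p))) by (intros; ring).
    rewrite pairing_mulc. ring. }
  destruct (Z.eq_dec v (pairingZ (after_loop k) E)) as [Ev|Ev]; [| lia].
  unfold walk_step. destruct excluded_middle_informative as [c|c]; [lia |].
  exfalso. apply c. unfold lands. rewrite Ht, Ev. exists 0%Z. ring.
Qed.

Lemma effective_walk_bound g l m E : effective E ->
  (walk l m (fun i => sigma l i E) g 0 g <= deg E)%Z.
Proof.
  intros HE.
  assert (H : forall n, (n <= g)%nat ->
    (walk l m (fun i => sigma l i E) g 0 n <= pairingZ (after_loop (g - n)) E)%Z).
  { induction n; intros Hn.
    - apply pairingZ_nonneg; [exact HE | apply after_loop_nonneg].
    - simpl. replace (g - S n)%nat with (g - n - 1)%nat by lia.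
      apply effective_walk_step; auto; [lia |]. apply IHn; lia. }
  specialize (H g (le_n g)). rewrite Nat.sub_diag in H.
  rewrite deg_pairingZ. assert (0 <= pairingZ (fun p => 1 - after_loop 0 p) E)%Z.
  { apply pairingZ_nonneg; auto. intros p; destruct p as [j|i e t]; simpl;
      [destruct j | destruct i]; simpl; lia. }
  rewrite pairingZ_minus in H0. lia.
Qed.

(** * The combinatorial contradiction *)

(* Coordinates of K - 2D, given the coordinates sg of D: the canonical
   divisor 2(v_1 + ... + v_{g-1}) has k-th coordinate 2(g-k)·ℓ_k. *)
Definition residual_coords (g : nat) (l : nat -> R) (sg : nat -> R) (i : nat) : R :=
  2 * INR (g - i) * l i - 2 * sg i.

(* Two landings at loop k of the same (or the residual) coordinates differ by
   N·ℓ_k ≡ 0 with 0 < |N| ≤ 2g-2, contradicting genericity; hence at most one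
   of the three quantities below lands, which propagates the invariant
   2(g-k) - M - B - Z ≤ 0 one loop further. *)
Lemma invariant_step g l m sg k (B Zh M : Z) :
  generic g l m -> (1 <= k <= g)%nat -> 0 < l k -> 0 < m k ->
  (0 <= B <= Z.of_nat (g - k))%Z -> (0 <= Zh <= Z.of_nat (g - k))%Z ->
  (B + 2 <= M <= Z.of_nat g - 1)%Z ->
  (2 * Z.of_nat (g - k) - bound_step l m sg k M - B - Zh <= 0)%Z ->
  (2 * Z.of_nat (g - k) + 2 - M - walk_step l m sg k B
     - walk_step l m (residual_coords g l sg) k Zh <= 0)%Z.
Proof.
  intros Hgen Hk Hl Hm HB HZ HM IH.
  set (n := Z.of_nat (g - k)) in *.
  assert (Hn : (n <= Z.of_nat g - 1)%Z) by (unfold n; lia).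
  assert (Htz : residual_coords g l sg k = 2 * IZR n * l k - 2 * sg k)
    by (unfold residual_coords, n; rewrite <- INR_IZR_INZ; reflexivity).
  unfold bound_step, walk_step, lands in *.
  destruct (excluded_middle_informative (multiple_of (sg k - IZR M * l k) (l k + m k))) as [u|u];
  destruct (excluded_middle_informative (multiple_of (sg k - IZR B * l k) (l k + m k))) as [b|b];
  destruct (excluded_middle_informative
    (multiple_of (residual_coords g l sg k - IZR Zh * l k) (l k + m k))) as [z|z];
  try lia.
  - exfalso. apply (generic_not_multiple g l m k (M - B)); auto; try lia.
    eapply multiple_eq; [| apply (multiple_sub _ _ _ b u)]. rewrite minus_IZR. ring.
  - exfalso. apply (generic_not_multiple g l m k (M - B)); auto; try lia.
    eapply multiple_eq; [| apply (multiple_sub _ _ _ b u)]. rewrite minus_IZR. ring.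
  - exfalso. apply (generic_not_multiple g l m k (2 * n - Zh - 2 * M)); auto; try lia.
    eapply multiple_eq; [| apply (multiple_add _ _ _ z (multiple_mulZ 2 _ _ u))].
    rewrite Htz, !minus_IZR, !mult_IZR. ring.
  - destruct (Z.eq_dec (2 * n - Zh - 2 * B) 0) as [E0|E0]; [lia |].
    exfalso. apply (generic_not_multiple g l m k (2 * n - Zh - 2 * B)); auto; try lia.
    eapply multiple_eq; [| apply (multiple_add _ _ _ z (multiple_mulZ 2 _ _ b))].
    rewrite Htz, !minus_IZR, !mult_IZR. ring.
Qed.

Lemma walk_contradiction g l m (sg : nat -> R) d :
  (1 <= g)%nat -> (forall i, (1 <= i <= g)%nat -> 0 < l i /\ 0 < m i) -> generic g l m ->
  (forall n, (n < g)%nat -> (walk l m sg g 0 n + 2 <= start_bound l m sg d (g - S n))%Z) ->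
  (walk l m (residual_coords g l sg) g 0 g <= 2 * Z.of_nat g - 2 - 2 * d)%Z ->
  False.
Proof.
  intros Hg Hlm Hgen Hrank Hres.
  set (tz := residual_coords g l sg) in *.
  assert (Zb : forall n, (0 <= walk l m tz g 0 n <= Z.of_nat n)%Z)
    by (intros; pose proof (walk_bounds l m tz g 0 n); lia).
  assert (Bb : forall n, (0 <= walk l m sg g 0 n <= Z.of_nat n)%Z)
    by (intros; pose proof (walk_bounds l m sg g 0 n); lia).
  assert (Hd : (d <= Z.of_nat g - 1)%Z) by (specialize (Zb g); lia).
  assert (Inv : forall n, (n <= g)%nat ->
    (2 * Z.of_nat n - start_bound l m sg d (g - n) - walk l m sg g 0 n
       - walk l m tz g 0 n <= 0)%Z).
  { induction n; intros Hn.
    - rewrite Nat.sub_0_r. specialize (Hrank 0%nat ltac:(lia)). simpl walk in *.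
      pose proof (start_bound_S l m sg d (g - 1)) as HS.
      replace (S (g - 1)) with g in HS by lia. lia.
    - assert (Hk : (1 <= g - n <= g)%nat) by lia.
      destruct (Hlm (g - n)%nat Hk) as [Hl Hm].
      specialize (Hrank n ltac:(lia)). specialize (IHn ltac:(lia)).
      pose proof (start_bound_le l m sg d (g - S n)).
      replace (g - n)%nat with (S (g - S n)) in IHn by lia. simpl start_bound in IHn.
      replace (S (g - S n)) with (g - n)%nat in IHn by lia.
      pose proof (invariant_step g l m sg (g - n) (walk l m sg g 0 n) (walk l m tz g 0 n)
                    (start_bound l m sg d (g - S n)) Hgen Hk Hl Hm) as Step.
      replace (g - (g - n))%nat with n in Step by lia. fold tz in Step.
      simpl walk. specialize (Bb n). specialize (Zb n).
      rewrite Nat2Z.inj_succ. lia. }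
  specialize (Inv g (le_n g)). rewrite Nat.sub_diag in Inv. simpl start_bound in Inv.
  specialize (Hrank (g - 1)%nat ltac:(lia)). replace (g - S (g - 1))%nat with 0%nat in Hrank by lia.
  simpl start_bound in Hrank.
  pose proof (walk_bounds l m sg (g - (g - 1)) (walk l m sg g 0 (g - 1)) 1) as Hlast.
  rewrite <- walk_compose, Nat.add_1_r in Hlast by lia.
  replace (S (g - 1)) with g in Hlast by lia.
  lia.
Qed.

Lemma valid_app g l m A B : valid_div g l m A -> valid_div g l m B -> valid_div g l m (A ++ B).
Proof. intros HA HB q z H. apply in_app_iff in H. destruct H; eauto. Qed.

Lemma valid_scale g l m k A : valid_div g l m A -> valid_div g l m (div_scale k A).
Proof.
  intros HA q z H. apply in_map_iff in H. destruct H as [[q' z'] [E H]].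
  inversion E; subst. eauto.
Qed.

Lemma valid_sub g l m A B : valid_div g l m A -> valid_div g l m B -> valid_div g l m (div_sub A B).
Proof. intros. apply valid_app; auto. apply valid_scale; auto. Qed.

Lemma valid_single g l m p c : valid_point g l m p -> valid_div g l m ((p, c) :: nil).
Proof. intros Hp q z [Hq|[]]. inversion Hq; subst. exact Hp. Qed.

Lemma valid_canonical g l m : valid_div g l m (canonical g).
Proof.
  intros q z H. apply in_map_iff in H. destruct H as [j [E H]].
  inversion E; subst. apply in_seq in H. simpl. lia.
Qed.

Lemma deg_canonical g : (1 <= g)%nat -> deg (canonical g) = (2 * Z.of_nat g - 2)%Z.
Proof.
  intros Hg. unfold canonical.
  assert (H : forall a n, deg (map (fun j => (Vtx j, 2%Z)) (seq a n)) = (2 * Z.of_nat n)%Z).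
  { intros a n. revert a. induction n; intros a; [reflexivity |]. cbn [seq map].
    change (deg ((Vtx a, 2%Z) :: map (fun j => (Vtx j, 2%Z)) (seq (S a) n)))
      with (2 + deg (map (fun j => (Vtx j, 2%Z)) (seq (S a) n)))%Z.
    rewrite IHn. lia. }
  rewrite H. lia.
Qed.

(* The k-th coordinate of K counts the 2(g-k) chips on v_k, ..., v_{g-1}. *)
Lemma sigma_canonical g l k : (1 <= k <= g)%nat -> sigma l k (canonical g) = 2 * INR (g - k) * l k.
Proof.
  intros Hk. unfold sigma, canonical. rewrite pairing_map.
  assert (H : forall n, sum_range (fun j => IZR 2 * pos l k (Vtx j)) 1 n = 2 * INR (n + 1 - k) * l k).
  { induction n.
    - unfold sum_range. simpl. destruct k; [lia |]. simpl. ring.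
    - rewrite sum_range_S, IHn. replace (1 + n)%nat with (S n) by lia. simpl pos.
      destruct (Nat.leb_spec k (S n)).
      + replace (S n + 1 - k)%nat with (S (n + 1 - k)) by lia. rewrite S_INR. ring.
      + replace (S n + 1 - k)%nat with 0%nat by lia. replace (n + 1 - k)%nat with 0%nat by lia.
        ring. }
  rewrite H. replace (g - 1 + 1 - k)%nat with (g - k)%nat by lia. reflexivity.
Qed.

Lemma canonical_walk_bound g l m D E :
  (1 <= g)%nat -> (forall i, (1 <= i <= g)%nat -> 0 < l i /\ 0 < m i) ->
  valid_div g l m D -> valid_div g l m E -> effective E ->
  lin_equiv g l m (div_sub (canonical g) (div_scale 2 D)) E ->
  (walk l m (residual_coords g l (fun i => sigma l i D)) g 0 g
     <= 2 * Z.of_nat g - 2 - 2 * deg D)%Z.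
Proof.
  intros Hg Hlm HD HE HEeff Hlin.
  assert (HKv : valid_div g l m (div_sub (canonical g) (div_scale 2 D)))
    by (apply valid_sub; [apply valid_canonical | apply valid_scale; auto]).
  destruct (linear_equiv_invariants g l m _ _ Hg Hlm HKv HE Hlin) as [Hdeg Hsig].
  pose proof (effective_walk_bound g l m E HEeff) as HW.
  rewrite <- Hdeg, deg_sub, deg_canonical, deg_pairingZ, pairingZ_scale, <- deg_pairingZ in HW
    by auto.
  rewrite (walk_cong l m _ (residual_coords g l (fun i => sigma l i D))) in HW; [lia |].
  intros n' Hn'. specialize (Hsig (g - n')%nat ltac:(lia)).
  unfold sigma in Hsig. rewrite pairing_sub, pairing_scale in Hsig.
  fold (sigma l (g - n') (canonical g)) in Hsig.
  rewrite sigma_canonical in Hsig by lia.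
  eapply multiple_eq; [| apply multiple_opp; exact Hsig]. unfold residual_coords, sigma. ring.
Qed.

Lemma rank_one_remove_point g l m D p :
  (1 <= g)%nat -> (forall i, (1 <= i <= g)%nat -> 0 < l i /\ 0 < m i) ->
  valid_div g l m D -> rank_ge g l m D 1 -> valid_point g l m p ->
  exists E, effective E /\ deg E = (deg D - 1)%Z /\
    forall k, (1 <= k <= g)%nat ->
      multiple_of (sigma l k E - (sigma l k D - pos l k p)) (l k + m k).
Proof.
  intros Hg Hlm HD [r [Hr Hrank]] Hp.
  destruct (Hrank ((p, Z.of_nat r) :: nil)) as [E1 [HE1v [HE1eff HE1lin]]].
  - apply valid_single; exact Hp.
  - intros q. rewrite coef_single. destruct point_eq_dec; lia.
  - simpl. lia.
  - assert (HDF : valid_div g l m (div_sub D ((p, Z.of_nat r) :: nil)))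
      by (apply valid_sub; [| apply valid_single]; auto).
    destruct (linear_equiv_invariants g l m _ _ Hg Hlm HDF HE1v HE1lin) as [Hdeg Hsig].
    (* put back r - 1 of the r removed chips at p *)
    exists (E1 ++ (p, (Z.of_nat r - 1)%Z) :: nil). split; [| split].
    + intros q. rewrite coef_app, coef_single. specialize (HE1eff q).
      destruct point_eq_dec; lia.
    + rewrite deg_app, <- Hdeg, deg_sub. simpl. lia.
    + intros k Hk. specialize (Hsig k Hk). unfold sigma in *.
      rewrite pairing_app, pairing_single. rewrite pairing_sub, pairing_single in Hsig.
      eapply multiple_eq; [| apply multiple_opp; exact Hsig]. rewrite minus_IZR. simpl. ring.
Qed.

Lemma exists_point_off_lattice a L c : 0 < L < c ->
  exists t, 0 < t < L /\ ~ multiple_of (a - t) c.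
Proof.
  intros HL. destruct (classic (multiple_of (a - L / 2) c)) as [c1|c1].
  - exists (L / 4). split; [lra |]. intros c2. apply (not_multiple_small (L / 4) c); [lra |].
    eapply multiple_eq; [| apply (multiple_sub _ _ _ c2 c1)]. field.
  - exists (L / 2). split; [lra | exact c1].
Qed.

(* Removing a point of the ℓ-edge of loop j at which the walk of sg does not
   land: the walk agrees with that of sg before loop j, is forced up at loop j,
   and afterwards is the walk of sg shifted by one. *)
Lemma walk_after_point_removal l m sg g j t : (1 <= j <= g)%nat ->
  ~ multiple_of (sg j - t - IZR (walk l m sg g 0 (g - j)) * l j) (l j + m j) ->
  walk l m (fun i => sg i - pos l i (Inn j true t)) g 0 g =
  (walk l m sg (j - 1) (walk l m sg g 0 (g - j) + 2) (j - 1) - 1)%Z.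
Proof.
  intros Hj Hoff. set (tau := fun i => sg i - pos l i (Inn j true t)).
  set (B := walk l m sg g 0 (g - j)) in *.
  replace g with ((g - j) + (1 + (j - 1)))%nat at 2 by lia.
  rewrite walk_compose, walk_compose by lia.
  replace (g - (g - j))%nat with j by lia.
  rewrite (walk_cong l m tau sg g 0 (g - j)).
  2:{ intros n' Hn'. unfold tau. simpl.
      replace (g - n' <? j)%nat with false by (symmetry; apply Nat.ltb_ge; lia).
      replace (j <? g - n')%nat with true by (symmetry; apply Nat.ltb_lt; lia).
      eapply multiple_eq; [| apply multiple_zero]. ring. }
  fold B.
  assert (Hstep : walk l m tau j B 1 = (B + 1)%Z).
  { simpl. rewrite Nat.sub_0_r. unfold walk_step.
    destruct excluded_middle_informative as [c|c]; [| reflexivity].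
    exfalso. apply Hoff. eapply multiple_eq; [| exact c]. unfold tau. simpl.
    rewrite Nat.ltb_irrefl. ring. }
  rewrite Hstep. replace (B + 2)%Z with (B + 1 + 1)%Z by ring. apply (walk_shift l m sg tau).
  intros n' Hn'. unfold tau. simpl.
  replace (j - 1 - n' <? j)%nat with true by (symmetry; apply Nat.ltb_lt; lia).
  replace (j <? j - 1 - n')%nat with false by (symmetry; apply Nat.ltb_ge; lia).
  reflexivity.
Qed.

Lemma rank_one_walk_bound g l m D :
  (1 <= g)%nat -> (forall i, (1 <= i <= g)%nat -> 0 < l i /\ 0 < m i) ->
  valid_div g l m D -> rank_ge g l m D 1 ->
  forall n, (n < g)%nat ->
    (walk l m (fun i => sigma l i D) g 0 n + 2
       <= start_bound l m (fun i => sigma l i D) (deg D) (g - S n))%Z.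
Proof.
  intros Hg Hlm HD Hrank n Hn. set (sg := fun i => sigma l i D).
  set (j := (g - n)%nat). assert (Hj : (1 <= j <= g)%nat) by (unfold j; lia).
  destruct (Hlm j Hj) as [Hl Hm].
  set (B := walk l m sg g 0 n).
  destruct (exists_point_off_lattice (sg j - IZR B * l j) (l j) (l j + m j) ltac:(lra))
    as [t [Ht Hoff]].
  assert (Hp : valid_point g l m (Inn j true t)) by (simpl; split; [lia | exact Ht]).
  destruct (rank_one_remove_point g l m D _ Hg Hlm HD Hrank Hp) as [E [HEeff [HEdeg HEsig]]].
  pose proof (effective_walk_bound g l m E HEeff) as HW.
  rewrite (walk_cong l m _ (fun i => sg i - pos l i (Inn j true t))) in HW.
  2:{ intros n' Hn'. apply HEsig. lia. }
  rewrite walk_after_point_removal in HW; [| exact Hj |].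
  - replace (g - j)%nat with n in HW by (unfold j; lia). fold B in HW.
    replace (g - S n)%nat with (j - 1)%nat by (unfold j; lia).
    apply walk_start_bound. lia.
  - replace (g - j)%nat with n by (unfold j; lia). fold B.
    intros c. apply Hoff. eapply multiple_eq; [| exact c]. ring.
Qed.

Theorem theorem1p1 (g : nat) (l m : nat -> R) :
  (1 <= g)%nat ->
  (forall i, (1 <= i <= g)%nat -> 0 < l i /\ 0 < m i) ->
  generic g l m ->
  ~ (exists D : divisor,
       valid_div g l m D /\ rank_ge g l m D 1 /\
       exists E : divisor,
         valid_div g l m E /\ effective E /\
         lin_equiv g l m (div_sub (canonical g) (div_scale 2 D)) E).
Proof.
  intros Hg Hlm Hgen [D [HD [Hrank [E [HE [HEeff Hlin]]]]]].
  apply (walk_contradiction g l m (fun i => sigma l i D) (deg D) Hg Hlm Hgen).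
  - exact (rank_one_walk_bound g l m D Hg Hlm HD Hrank).
  - exact (canonical_walk_bound g l m D E Hg Hlm HD HE HEeff Hlin).
Qed.
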